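(* Let $\mathcal{X},\mathcal{Y}\in\{\mathcal{U},\mathcal{D},\mathcal{B},\mathcal{L},\mathcal{R}\}$ with $\mathcal{X}\not\le_{\mathfrak T}\mathcal{Y}$. Then for every $I\in\mathcal{X}$ and $J\in\mathcal{Y}$, $\mathrm{Hom}_B(k_I,k_J)=0$.
   Context: Let $k$ be a field. The bipath poset $B$ has underlying set $(\mathbb{R}\times\{1,2\})\sqcup\{-\infty,+\infty\}$. Its order is: $x\le y$ iff $x=-\infty$, or $y=+\infty$, or $x=(s,i)$, $y=(t,i)$ with the same $i$ and $s\le t$. $B$-persistence modules are functors from $B$ (as a category) to $k$-vector spaces, and $\mathrm{Hom}_B$ denotes natural transformations. An interval of $B$ is a nonempty convex and connected subset (convex: $p,q\in I$, $p\le r\le q$ imply $r\in I$; connected: any two elements are joined by a finite sequence in $I$ with consecutive ones comparable). The interval module $k_I$ is $k$ on $I$ and $0$ elsewhere, with identity maps within $I$ and zero maps otherwise. The intervals of $B$ are divided into five types: - $\mathcal{U}$: intervals contained in $\mathbb{R}\times\{1\}$; - $\mathcal{D}$: intervals contained in $\mathbb{R}\times\{2\}$; - $\mathcal{B}=\{B\}$; - $\mathcal{L}$: intervals $\neq B$ containing $-\infty$; - $\mathcal{R}$: intervals $\neq B$ containing $+\infty$. $\le_{\mathfrak T}$ is the partial order on these five types generated by $\mathcal{R}\le\mathcal{U}$, $\mathcal{R}\le\mathcal{B}$, $\mathcal{R}\le\mathcal{D}$, $\mathcal{U}\le\mathcal{L}$, $\mathcal{B}\le\mathcal{L}$, $\mathcal{D}\le\mathcal{L}$.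 It is the reflexive-transitive closure, so also $\mathcal{R}\le\mathcal{L}$. *)

From HB Require Import structures.
From mathcomp Require Import all_boot all_order all_algebra.
From mathcomp Require Import reals.
From Stdlib Require Import Relations.
Set Implicit Arguments. Unset Strict Implicit. Unset Printing Implicit Defensive.
Import Order.TTheory GRing.Theory Num.Theory.
Local Open Scope ring_scope.

(* the two copies of R are indexed by lane1 (i=1) and lane2 (i=2) *)
Inductive lane := lane1 | lane2.

Definition lane_eqb (a b : lane) : bool :=
  match a, b with lane1, lane1 | lane2, lane2 => true | _, _ => false end.

(* underlying set of the bipath poset B: (R x {1,2}) + {-oo, +oo} *)
Inductive Bpt (R : realType) :=
  | NegInf
  | PosInf
  | Pt of R & lane.
Arguments NegInf {R}. Arguments PosInf {R}.

Definition Ble (R : realType) (x y : Bpt R) : bool :=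
  match x, y with
  | NegInf, _ => true
  | _, PosInf => true
  | Pt s i, Pt t j => lane_eqb i j && (s <= t)
  | _, _ => false
  end.

(* subsets of B (classically, every subset has a boolean indicator) *)
Definition Bsub (R : realType) := Bpt R -> bool.

Definition is_convex (R : realType) (I : Bsub R) : Prop :=
  forall p q r, I p -> I q -> Ble p r -> Ble r q -> I r.

Definition comparable_B (R : realType) (a b : Bpt R) : bool := Ble a b || Ble b a.

Definition is_connected (R : realType) (I : Bsub R) : Prop :=
  forall p q, I p -> I q ->
    exists s : seq (Bpt R), all I s /\ path (@comparable_B R) p s /\ last p s = q.

Definition is_interval (R : realType) (I : Bsub R) : Prop :=
  (exists x, I x) /\ is_convex I /\ is_connected I.

Inductive itype := tU | tD | tB | tL | tR.

Definition is_whole (R : realType) (I : Bsub R) : Prop := forall x, I x.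

Definition in_type (R : realType) (X : itype) (I : Bsub R) : Prop :=
  match X with
  | tU => forall x, I x -> exists r, x = Pt r lane1
  | tD => forall x, I x -> exists r, x = Pt r lane2
  | tB => is_whole I
  | tL => ~ is_whole I /\ I NegInf
  | tR => ~ is_whole I /\ I PosInf
  end.

Inductive type_gen : itype -> itype -> Prop :=
  | gRU : type_gen tR tU
  | gRB : type_gen tR tB
  | gRD : type_gen tR tD
  | gUL : type_gen tU tL
  | gBL : type_gen tB tL
  | gDL : type_gen tD tL.

Definition type_le : itype -> itype -> Prop := clos_refl_trans itype type_gen.

(* Interval module k_I: at x it is k^(dim) with dim = 1 if x in I, 0 otherwise,
   i.e. the row-vector space 'rV[k]_(imdim I x).  Linear maps k^m -> k^n are
   matrices 'M_(m,n) acting on row vectors (v |-> v *m A). *)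
Definition imdim (R : realType) (I : Bsub R) (x : Bpt R) : nat := nat_of_bool (I x).

(* structure map k_I(x <= y): identity when x,y in I, zero otherwise *)
Definition imap (k : fieldType) (R : realType) (I : Bsub R) (x y : Bpt R)
  : 'M[k]_(imdim I x, imdim I y) := const_mx 1.

Definition is_nat_trans (k : fieldType) (R : realType) (I J : Bsub R)
  (eta : forall x : Bpt R, 'M[k]_(imdim I x, imdim J x)) : Prop :=
  forall x y, Ble x y -> eta x *m imap k J x y = imap k I x y *m eta y.

From mathcomp Require Import all_boot all_order all_algebra.
From mathcomp Require Import reals.
From Stdlib Require Import Relations.
Set Implicit Arguments. Unset Strict Implicit. Unset Printing Implicit Defensive.
Import GRing.Theory.
Local Open Scope ring_scope.

(* Every interval type decides which of the two ends of B its members contain: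
   U and D contain neither, B both, L only -oo and R only +oo (a convex set
   containing both ends is all of B).  If X is not <=_T Y, then either the
   types are U and D, whose intervals are disjoint, or some end lies in J but
   not in I, or in I but not in J.  In the second case every x lies below +oo
   in J \ I, and naturality at x <= +oo factors eta x through k_I(+oo) = 0;
   the third case is dual, using -oo <= x. *)

Lemma mx_bool_eq0 (k : fieldType) (a b : bool)
    (A : 'M[k]_(nat_of_bool a, nat_of_bool b)) :
  ~~ (a && b) -> A = 0.
Proof. by case: a b A => [] [] //= A _; [exact: thinmx0 | exact: flatmx0 ..]. Qed.

Lemma mulmx_bool0 (k : fieldType) m n (a : bool)
    (B : 'M[k]_(m, nat_of_bool a)) (C : 'M[k]_(nat_of_bool a, n)) :
  ~~ a -> B *m C = 0.
Proof. by case: a B C => // B C _; rewrite (thinmx0 B) mul0mx. Qed.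

Lemma mulmx_const1_eq0 (k : fieldType) m (a b : bool)
    (A : 'M[k]_(m, nat_of_bool a)) :
  A *m (const_mx 1 : 'M_(nat_of_bool a, nat_of_bool b)) = 0 -> a -> b -> A = 0.
Proof.
case: a b A => [] [] // A /matrixP A0 _ _; apply/matrixP => i j.
by move: (A0 i j); rewrite !mxE big_ord1 mxE mulr1 (ord1 j).
Qed.

Lemma const1_mulmx_eq0 (k : fieldType) n (a b : bool)
    (A : 'M[k]_(nat_of_bool b, n)) :
  (const_mx 1 : 'M_(nat_of_bool a, nat_of_bool b)) *m A = 0 -> a -> b -> A = 0.
Proof.
case: a b A => [] [] // A /matrixP A0 _ _; apply/matrixP => i j.
by move: (A0 i j); rewrite !mxE big_ord1 mxE mul1r (ord1 i).
Qed.

Section NatTransVanishing.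

Variables (k : fieldType) (R : realType) (I J : Bsub R).
Variable eta : forall x : Bpt R, 'M[k]_(imdim I x, imdim J x).
Hypothesis eta_nat : is_nat_trans eta.

Lemma nat_trans_eq0_outside x : ~~ (I x && J x) -> eta x = 0.
Proof. exact: mx_bool_eq0. Qed.

Lemma nat_trans_eq0_below x y : Ble x y -> J y -> ~~ I y -> eta x = 0.
Proof.
move=> le_xy Jy nIy; have [/andP[Ix Jx] | ] := boolP (I x && J x); last first.
  exact: nat_trans_eq0_outside.
have := eta_nat le_xy; rewrite /imap [RHS]mulmx_bool0 //.
by move/mulmx_const1_eq0; apply.
Qed.

Lemma nat_trans_eq0_above w x : Ble w x -> I w -> ~~ J w -> eta x = 0.
Proof.
move=> le_wx Iw nJw; have [/andP[Ix Jx] | ] := boolP (I x && J x); last first.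
  exact: nat_trans_eq0_outside.
have := eta_nat le_wx; rewrite /imap [LHS]mulmx_bool0 //.
by move/esym/const1_mulmx_eq0; apply.
Qed.

Lemma nat_trans_eq0_PosInf x : J PosInf -> ~~ I PosInf -> eta x = 0.
Proof. by apply: nat_trans_eq0_below; case: x. Qed.

Lemma nat_trans_eq0_NegInf x : I NegInf -> ~~ J NegInf -> eta x = 0.
Proof. exact: nat_trans_eq0_above. Qed.

End NatTransVanishing.

Definition type_has_PosInf (X : itype) : bool :=
  if X is (tB | tR) then true else false.

Definition type_has_NegInf (X : itype) : bool :=
  if X is (tB | tL) then true else false.

Lemma convex_ends_whole (R : realType) (I : Bsub R) :
  is_convex I -> I NegInf -> I PosInf -> is_whole I.
Proof. by move=> cI IN IP x; apply: (cI NegInf PosInf) => //; case: x. Qed.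

Lemma in_type_PosInf (R : realType) (X : itype) (I : Bsub R) :
  is_convex I -> in_type X I -> I PosInf = type_has_PosInf X.
Proof.
case: X => /= cI hI.
- by apply/negbTE/negP => /hI [].
- by apply/negbTE/negP => /hI [].
- exact: hI.
- by case: hI => nwI IN; apply/negbTE/negP => IP; apply/nwI/convex_ends_whole.
- by case: hI.
Qed.

Lemma in_type_NegInf (R : realType) (X : itype) (I : Bsub R) :
  is_convex I -> in_type X I -> I NegInf = type_has_NegInf X.
Proof.
case: X => /= cI hI.
- by apply/negbTE/negP => /hI [].
- by apply/negbTE/negP => /hI [].
- exact: hI.
- by case: hI.
- by case: hI => nwI IP; apply/negbTE/negP => IN; apply/nwI/convex_ends_whole.
Qed.

Lemma in_type_UD_disjoint (R : realType) (I J : Bsub R) x :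
  in_type tU I -> in_type tD J -> ~~ (I x && J x).
Proof. by move=> hI hJ; apply/andP => -[/hI [r ->] /hJ [s []]]. Qed.

Lemma type_le_R (X : itype) : type_le tR X.
Proof.
case: X; try by apply: rt_step; constructor.
- by apply: (rt_trans _ _ _ tB); apply: rt_step; constructor.
- exact: rt_refl.
Qed.

Lemma type_le_L (X : itype) : type_le X tL.
Proof.
case: X; try by apply: rt_step; constructor.
- exact: rt_refl.
- exact: type_le_R.
Qed.

Lemma not_type_le_cases (X Y : itype) : ~ type_le X Y ->
  [\/ X = tU /\ Y = tD, X = tD /\ Y = tU,
      type_has_PosInf Y && ~~ type_has_PosInf X
    | type_has_NegInf X && ~~ type_has_NegInf Y].
Proof.
case: X Y => [] [] nXY /=;
  try by [constructor 1 | constructor 2 | constructor 3 | constructor 4];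
  by case: nXY; first [exact: rt_refl | exact: type_le_R | exact: type_le_L].
Qed.

Theorem lemma4p4 (k : fieldType) (R : realType) (X Y : itype) :
  ~ type_le X Y ->
  forall I J : Bsub R,
    is_interval I -> is_interval J -> in_type X I -> in_type Y J ->
    forall eta : (forall x : Bpt R, 'M[k]_(imdim I x, imdim J x)),
      is_nat_trans eta -> forall x, eta x = 0.
Proof.
move=> nXY I J [_ [cI _]] [_ [cJ _]] hI hJ eta eta_nat x.
case: (not_type_le_cases nXY) => [[eX eY] | [eX eY] | /andP[YP nXP] | /andP[XN nYN]].
- by apply: nat_trans_eq0_outside; rewrite eX eY in hI hJ; exact: in_type_UD_disjoint.
- apply: nat_trans_eq0_outside; rewrite eX eY in hI hJ.
  by rewrite andbC; exact: in_type_UD_disjoint.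
- apply: (nat_trans_eq0_PosInf eta_nat x);
  by rewrite ?(in_type_PosInf cI hI) ?(in_type_PosInf cJ hJ).
- apply: (nat_trans_eq0_NegInf eta_nat x);
  by rewrite ?(in_type_NegInf cI hI) ?(in_type_NegInf cJ hJ).
Qed.
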